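(* Let $A,G$ be countable abelian groups. Then $\mathrm{PExt}(A,G)$ is the closure of $\{0\}$ in $\mathrm{Ext}(A,G)$, and $\mathrm{Ext}_{\mathrm w}(A,G)$ is a Polish group.
   Context: For countable $A,G$: $\mathsf Z(A,G)$ is the Polish group (closed in $G^{A\times A}$, $G$ discrete) of functions $c:A\times A\to G$ with $c(x,0)=0$, $c(x,y)=c(y,x)$, $c(y,z)-c(x+y,z)+c(x,y+z)-c(x,y)=0$; $\mathsf B(A,G)$ is the Polishable subgroup of coboundaries $c(x,y)=\phi(y)-\phi(x+y)+\phi(x)$ with $\phi:A\to G$, $\phi(0)=0$; $\mathsf B_{\mathrm w}(A,G)$ is the subgroup of $c\in\mathsf Z(A,G)$ such that $c|_{S\times S}\in\mathsf B(S,G)$ for every finite subgroup $S\le A$. Then $\mathrm{Ext}(A,G)=\mathsf Z(A,G)/\mathsf B(A,G)$, $\mathrm{PExt}(A,G)=\mathsf B_{\mathrm w}(A,G)/\mathsf B(A,G)$, and $\mathrm{Ext}_{\mathrm w}(A,G)=\mathsf Z(A,G)/\mathsf B_{\mathrm w}(A,G)$, regarded as groups with a Polish cover (quotients of a Polish group by a Polishable subgroup). Closure of $\{0\}$ in $\mathrm{Ext}(A,G)$ means $\overline{\mathsf B(A,G)}/\mathsf B(A,G)$; a group with a Polish cover $\hat G/N$ is a Polish group if $N$ is closed in $\hat G$. *)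

From HB Require Import structures.
From mathcomp Require Import all_boot all_order all_algebra.
Set Implicit Arguments. Unset Strict Implicit. Unset Printing Implicit Defensive.
Import GRing.Theory.
Local Open Scope ring_scope.

Section Cocycles.
Variables (A G : countZmodType).

(* Z(A,G): symmetric normalized 2-cocycles c : A x A -> G (curried). *)
Definition cocycle (c : A -> A -> G) : Prop :=
  [/\ forall x, c x 0 = 0,
      forall x y, c x y = c y x &
      forall x y z, c y z - c (x + y) z + c x (y + z) - c x y = 0].

Definition coboundary_on (P : A -> Prop) (c : A -> A -> G) : Prop :=
  exists phi : A -> G, phi 0 = 0 /\
    forall x y, P x -> P y -> c x y = phi y - phi (x + y) + phi x.

Definition coboundary (c : A -> A -> G) : Prop := coboundary_on (fun _ => True) c.

Definition finite_subgroup (S : seq A) : Prop :=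
  0 \in S /\ forall x y, x \in S -> y \in S -> x - y \in S.

Definition weak_coboundary (c : A -> A -> G) : Prop :=
  cocycle c /\
  forall S : seq A, finite_subgroup S -> coboundary_on (fun x => x \in S) c.

(* closure in G^(A x A) with the product topology, G discrete:
   every basic neighbourhood (agreement on a finite set of pairs) meets P *)
Definition in_closure (P : (A -> A -> G) -> Prop) (c : A -> A -> G) : Prop :=
  forall F : seq (A * A), exists b, P b /\
    forall p, p \in F -> b p.1 p.2 = c p.1 p.2.

End Cocycles.

(* A cocycle c defines the extension E = G x_c A, in which the set-theoretic section
   a |-> (0, a) has coboundary c.  If c is a coboundary on every finite subgroup, every
   torsion element of A lifts to an element of E of the same order, so G is pure in E.
   A finite Z-linear system with constants in a pure subgroup that is solvable in the big
   group is solvable in the subgroup: by the Smith normal form it suffices to treat diagonal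
   systems, which is exactly purity.  The equations phi x + phi y - phi (x + y) = c x y over
   finitely many pairs are solved in E by the section, hence in G, so c is a limit of
   coboundaries.  Conversely, being a coboundary on a finite subgroup S only involves the
   values on S x S, so it passes to limits. *)

From HB Require Import structures.
From mathcomp Require Import all_boot all_order all_algebra.
Set Implicit Arguments. Unset Strict Implicit. Unset Printing Implicit Defensive.
Import GRing.Theory.
Local Open Scope ring_scope.

Section IntMatrixAction.
Variable V : zmodType.

Definition mxact m n (M : 'M[int]_(m, n)) (u : 'I_n -> V) : 'I_m -> V :=
  fun i => \sum_j u j *~ M i j.

Lemma mxact_mul m n p (M : 'M[int]_(m, n)) (N : 'M[int]_(n, p)) u :
  mxact (M *m N) u =1 mxact M (mxact N u).
Proof.
move=> i; rewrite /mxact.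
under eq_bigr => j _ do rewrite mxE mulrz_sumr.
rewrite exchange_big /=; apply: eq_bigr => l _.
rewrite mulrz_suml; apply: eq_bigr => j _.
by rewrite mulrC mulrzA.
Qed.

Lemma mxact1 n (u : 'I_n -> V) : mxact 1%:M u =1 u.
Proof.
move=> i; rewrite /mxact (bigD1 i) //= mxE eqxx mulr1n big1 ?addr0 // => j ji.
by rewrite mxE eq_sym (negbTE ji) mulr0n.
Qed.

Lemma eq_mxact m n (M : 'M[int]_(m, n)) (u v : 'I_n -> V) :
  u =1 v -> mxact M u =1 mxact M v.
Proof. by move=> uv i; apply: eq_bigr => j _; rewrite uv. Qed.

Section Diagonal.
Variables (r k : nat) (d : seq int).

Definition diag_int_mx : 'M[int]_(r, k) := \matrix_(i, j) (d`_i *+ (i == j :> nat)).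

Lemma mxact_diag_eq (u : 'I_k -> V) (i : 'I_r) (j : 'I_k) :
  i = j :> nat -> mxact diag_int_mx u i = u j *~ d`_i.
Proof.
move=> ij; rewrite /mxact (bigD1 j) //= mxE ij eqxx mulr1n big1 ?addr0 // => l lj.
by rewrite mxE ij -[_ == _ :> nat]/(j == l) eq_sym (negbTE lj) mulr0n.
Qed.

Lemma mxact_diag_out (u : 'I_k -> V) (i : 'I_r) :
  (k <= i)%N -> mxact diag_int_mx u i = 0.
Proof.
move=> ki; rewrite /mxact big1 // => j _.
by rewrite mxE gtn_eqF ?mulr0n // (leq_trans (ltn_ord j) ki).
Qed.

End Diagonal.
End IntMatrixAction.

Lemma raddf_mxact (U V : zmodType) (f : {additive U -> V}) m n (M : 'M[int]_(m, n)) u i :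
  f (mxact M u i) = mxact M (f \o u) i.
Proof. by rewrite /mxact raddf_sum; apply: eq_bigr => j _; rewrite raddfMz. Qed.

Section PureEmbedding.
Variables (U V : zmodType) (f : {additive U -> V}).

(* Purity of the image; the instance n = 0 also forces f to be injective. *)
Definition pure_embedding : Prop :=
  forall (x : U) (v : V) (n : int), f x = v *~ n -> exists y, x = y *~ n.

Hypothesis f_pure : pure_embedding.

Lemma pure_embedding_inj : injective f.
Proof.
move=> x y fxy; apply/eqP; rewrite -subr_eq0.
have /f_pure[z ->] : f (x - y) = 0 *~ 0 by rewrite raddfB fxy subrr.
by rewrite mulr0z.
Qed.

Lemma pure_solve_diag r k (d : seq int) (w : 'I_r -> U) (u : 'I_k -> V) :
  (forall i, f (w i) = mxact (diag_int_mx r k d) u i) ->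
  exists y, mxact (diag_int_mx r k d) y =1 w.
Proof.
move=> fw.
have /fin_all_exists[y wE] :
    forall j : 'I_k, exists z, forall i : 'I_r, i = j :> nat -> w i = z *~ d`_i.
  move=> j; case: (ltnP j r) => [jr | rj]; last first.
    by exists 0 => i ij; move: (ltn_ord i); rewrite ij ltnNge rj.
  have := fw (Ordinal jr); rewrite (mxact_diag_eq _ _ (j := j)) // => /f_pure[z wz].
  by exists z => i ij; have -> : i = Ordinal jr by apply: val_inj.
exists y => i; case: (ltnP i k) => [ik | ki].
  by rewrite (mxact_diag_eq _ _ (j := Ordinal ik)) // (wE (Ordinal ik) i).
rewrite mxact_diag_out //; apply: pure_embedding_inj.
by rewrite fw mxact_diag_out // raddf0.
Qed.

Lemma pure_solve r k (M : 'M[int]_(r, k)) (w : 'I_r -> U) (u : 'I_k -> V) :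
  (forall i, f (w i) = mxact M u i) -> exists y, mxact M y =1 w.
Proof.
move=> fw; have [L L_unit [R R_unit [d _ defM]]] := int_Smith_normal_form M.
have {}defM : M = L *m diag_int_mx r k d *m R := defM.
have fw' i : f (mxact (invmx L) w i) = mxact (diag_int_mx r k d) (mxact R u) i.
  by rewrite raddf_mxact (eq_mxact _ fw) -!mxact_mul defM !mulmxA mulVmx // mul1mx.
have [y hy] := pure_solve_diag fw'.
exists (mxact (invmx R) y) => i.
rewrite -mxact_mul defM -mulmxA mulmxV // mulmx1 mxact_mul (eq_mxact _ hy).
by rewrite -mxact_mul mulmxV // mxact1.
Qed.

End PureEmbedding.

Section Multiples.
Variables (A : countZmodType) (a : A) (m : nat).
Hypothesis am : a *+ m.+1 = 0.

Lemma mem_multiples q : a *+ q \in mkseq (fun i => a *+ i) m.+1.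
Proof.
rewrite (divn_eq q m.+1) mulrnDr mulnC mulrnA am mul0rn add0r.
by apply: map_f; rewrite mem_iota ltn_mod.
Qed.

Lemma finite_subgroup_multiples : finite_subgroup (mkseq (fun i => a *+ i) m.+1).
Proof.
split; first exact: (mem_multiples 0).
move=> _ _ /mapP[i _ ->] /mapP[j _ ->].
have -> : - (a *+ j) = a *+ (j * m).
  by apply: addr0_eq; rewrite -mulrnDr -mulnS mulnC mulrnA am mul0rn.
by rewrite -mulrnDr mem_multiples.
Qed.

End Multiples.

Section Coboundaries.
Variables (A V : zmodType).

Definition cobound (phi : A -> V) (x y : A) : V := phi y - phi (x + y) + phi x.

Lemma coboundB (phi psi : A -> V) x y :
  cobound (phi \- psi) x y = cobound phi x y - cobound psi x y.
Proof.
rewrite /cobound /= opprB [in RHS]opprD [in RHS]addrACA opprB; congr (_ + _).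
by rewrite addrACA [RHS]addrACA [- psi y + _]addrC.
Qed.

Lemma cobound_eq0 (phi : A -> V) x y : cobound phi x y = 0 -> phi (x + y) = phi x + phi y.
Proof. by rewrite /cobound => /eqP; rewrite addrAC subr_eq0 addrC => /eqP <-. Qed.

End Coboundaries.

Lemma raddf_cobound (A U V : zmodType) (f : {additive U -> V}) (phi : A -> U) x y :
  f (cobound phi x y) = cobound (f \o phi) x y.
Proof. by rewrite /cobound raddfD raddfB. Qed.

Section CocycleSystem.
Variables (A : zmodType) (F : seq (A * A)).

Definition system_points : seq A := flatten [seq [:: p.1; p.2; p.1 + p.2] | p <- F].
Local Notation X := system_points.

(* Unknowns are indexed by positions in [system_points]; [eval_point u a] is the unknown
   at the first position of [a]. *)
Definition point_coord (a : A) (j : 'I_(size X)) : int := (j == index a X :> nat)%:R.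

Definition eval_point (V : zmodType) (u : 'I_(size X) -> V) (a : A) : V :=
  \sum_j u j *~ point_coord a j.

Definition cocycle_system : 'M[int]_(size F, size X) :=
  \matrix_(i, j) cobound (point_coord^~ j) (nth (0, 0) F i).1 (nth (0, 0) F i).2.

Lemma mxact_cocycle_system (V : zmodType) (u : 'I_(size X) -> V) i :
  mxact cocycle_system u i = cobound (eval_point u) (nth (0, 0) F i).1 (nth (0, 0) F i).2.
Proof.
rewrite /mxact; under eq_bigr => j _ do rewrite mxE mulrzDr mulrzBr.
by rewrite big_split sumrB.
Qed.

Lemma eval_point_nth (V : zmodType) (f : A -> V) a :
  a \in X -> eval_point (fun j => f (nth 0 X j)) a = f a.
Proof.
move=> aX; rewrite /eval_point; under eq_bigr => j _ do rewrite mulrz_nat mulrb.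
by rewrite -big_mkcond (big_ord1_eq _ (fun j => f (nth 0 X j))) index_mem aX nth_index.
Qed.

Lemma mem_system_points p : p \in F -> [/\ p.1 \in X, p.2 \in X & p.1 + p.2 \in X].
Proof. by move=> pF; split; apply/flatten_mapP; exists p; rewrite // !inE eqxx ?orbT. Qed.

End CocycleSystem.

Section CocycleExtension.
Variables (A G : countZmodType) (c : A -> A -> G).
Hypothesis c_cocycle : cocycle c.

Lemma cocycle0x x : c 0 x = 0.
Proof. by case: c_cocycle => c_x0 cC _; rewrite cC c_x0. Qed.

Lemma cocycleE x y z : c (x + y) z + c x y = c y z + c x (y + z).
Proof.
case: c_cocycle => _ _ /(_ x y z) /subr0_eq <-.
by rewrite addrC addrAC subrK.
Qed.

Definition ext : Type := (G * A)%type.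
HB.instance Definition _ := Choice.copy ext (G * A)%type.

Definition ext_add (u v : ext) : ext := (u.1 + v.1 + c u.2 v.2, u.2 + v.2).
Definition ext_opp (u : ext) : ext := (- u.1 - c u.2 (- u.2), - u.2).

Lemma ext_addA : associative ext_add.
Proof.
move=> [g x] [h y] [k z]; rewrite /ext_add /=; congr pair; last by rewrite addrA.
rewrite -!addrA; congr (_ + _); congr (_ + _).
by rewrite -cocycleE [c x y + _]addrCA [c (x + y) z + _]addrC.
Qed.

Lemma ext_addC : commutative ext_add.
Proof.
move=> [g x] [h y]; rewrite /ext_add /=; congr pair; last by rewrite addrC.
by case: c_cocycle => _ cC _; rewrite cC [g + h]addrC.
Qed.

Lemma ext_add0 : left_id (0, 0) ext_add.
Proof. by move=> [g x]; rewrite /ext_add /= cocycle0x !add0r addr0. Qed.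

Lemma ext_addN : left_inverse (0, 0) ext_opp ext_add.
Proof.
move=> [g x]; rewrite /ext_add /ext_opp /=; congr pair; last by rewrite addNr.
by case: c_cocycle => _ cC _; rewrite [c (- x) x]cC addrAC subrK addNr.
Qed.

HB.instance Definition _ := GRing.isZmodule.Build ext ext_addA ext_addC ext_add0 ext_addN.

Definition ext_incl (g : G) : ext := (g, 0).
Definition ext_proj (u : ext) : A := u.2.
Definition ext_sec (a : A) : ext := (0, a).

Lemma ext_incl_is_additive : {morph ext_incl : g h / g - h}.
Proof.
move=> g h; rewrite /ext_incl; congr pair; rewrite /= /ext_opp /=.
  by rewrite !cocycle0x subr0 addr0.
by rewrite oppr0 addr0.
Qed.
HB.instance Definition _ := GRing.isZmodMorphism.Build G ext ext_incl ext_incl_is_additive.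

Lemma ext_proj_is_additive : {morph ext_proj : u v / u - v}.
Proof. by []. Qed.
HB.instance Definition _ := GRing.isZmodMorphism.Build ext A ext_proj ext_proj_is_additive.

Lemma ext_incl_inj : injective ext_incl.
Proof. by move=> g h [->]. Qed.

Lemma ext_proj_eq0 u : ext_proj u = 0 -> u = ext_incl u.1.
Proof. by case: u => g a /= ->. Qed.

Lemma ext_incl_cocycle x y : ext_incl (c x y) = cobound ext_sec x y.
Proof.
rewrite /cobound addrAC [ext_sec y + _]addrC /ext_incl; congr pair; rewrite /= /ext_opp /=.
  by rewrite oppr0 !add0r subrK.
by rewrite subrr.
Qed.

Section Purity.
Hypothesis c_split : forall S : seq A, finite_subgroup S -> coboundary_on (fun x => x \in S) c.

Lemma ext_lift_torsion (a : A) (m : nat) :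
  a *+ m = 0 -> exists2 t : ext, ext_proj t = a & t *+ m = 0.
Proof.
case: m => [_ | m am]; first by exists (ext_sec a).
have [phi [phi0 phiE]] := c_split (finite_subgroup_multiples am).
pose t := ext_sec \- (ext_incl \o phi).
have t0 : t 0 = 0 by rewrite /t /= phi0 raddf0 addr0.
have tD x y : x \in mkseq (fun i => a *+ i) m.+1 -> y \in mkseq (fun i => a *+ i) m.+1 ->
    t (x + y) = t x + t y.
  move=> xS yS; apply: cobound_eq0.
  have cE : c x y = cobound phi x y := phiE x y xS yS.
  by rewrite coboundB -raddf_cobound -cE -ext_incl_cocycle subrr.
have tX q : t a *+ q = t (a *+ q).
  elim: q => [|q IHq]; first by rewrite mulr0n t0.
  rewrite mulrSr [in RHS]mulrSr IHq tD //; first exact: mem_multiples.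
  exact: (mem_multiples am 1).
exists (t a); first by rewrite /t raddfB /= subr0.
by rewrite tX am t0.
Qed.

Lemma ext_lift_torsionz (a : A) (n : int) :
  a *~ n = 0 -> exists2 t : ext, ext_proj t = a & t *~ n = 0.
Proof.
case: n => m; first exact: ext_lift_torsion.
rewrite NegzE mulrNz => /eqP; rewrite oppr_eq0 => /eqP /ext_lift_torsion[t ta tm].
by exists t; rewrite // mulrNz -pmulrn tm oppr0.
Qed.

Lemma ext_incl_pure : pure_embedding ext_incl.
Proof.
move=> x e n xe.
have /ext_lift_torsionz[t te tn] : ext_proj e *~ n = 0 by rewrite -raddfMz -xe.
have /ext_proj_eq0 et : ext_proj (e - t) = 0 by rewrite ext_proj_is_additive te subrr.
rewrite -[e](subrK t) et mulrzDl tn addr0 -raddfMz in xe.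
by exists (e - t).1; apply: ext_incl_inj.
Qed.

Lemma cocycle_in_closure : in_closure (@coboundary A G) c.
Proof.
(* The equation for the pair (0, 0) forces the solution to vanish at 0. *)
move=> F; pose F0 := (0, 0) :: F.
have [phi phiE] : exists phi,
    mxact (cocycle_system F0) phi =1 fun i => c (nth (0, 0) F0 i).1 (nth (0, 0) F0 i).2.
  apply: (pure_solve ext_incl_pure (u := fun j => ext_sec (nth 0 (system_points F0) j))) => i.
  have [p1X p2X p12X] := mem_system_points (mem_nth (0, 0) (ltn_ord i)).
  rewrite mxact_cocycle_system /cobound !eval_point_nth //; exact: ext_incl_cocycle.
have cE p : p \in F0 -> c p.1 p.2 = cobound (eval_point phi) p.1 p.2.
  move=> pF0; have pF0' : (index p F0 < size F0)%N by rewrite index_mem.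
  by rewrite -(nth_index (0, 0) pF0) -(phiE (Ordinal pF0')) mxact_cocycle_system.
exists (cobound (eval_point phi)); split.
  exists (eval_point phi); split=> //.
  by have := cE _ (mem_head _ _); rewrite /= cocycle0x /cobound addr0 subrr add0r => <-.
by move=> p pF; rewrite cE // inE pF orbT.
Qed.

End Purity.
End CocycleExtension.

Lemma in_closure_coboundary_on (A G : countZmodType) (P : (A -> A -> G) -> Prop) c :
  (forall b S, P b -> finite_subgroup S -> coboundary_on (fun x => x \in S) b) ->
  in_closure P c -> forall S, finite_subgroup S -> coboundary_on (fun x => x \in S) c.
Proof.
move=> P_cobound c_cl S S_subgroup.
have [b [Pb bc]] := c_cl [seq (x, y) | x <- S, y <- S].
have [phi [phi0 phiE]] := P_cobound b S Pb S_subgroup.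
by exists phi; split=> // x y xS yS; rewrite -(bc (x, y)) ?phiE ?allpairs_f.
Qed.

Theorem lemma3p2 (A G : countZmodType) :
  (* PExt(A,G) = closure of {0} in Ext(A,G), i.e. closure of B in Z equals B_w *)
  (forall c : A -> A -> G,
      (cocycle c /\ in_closure (@coboundary A G) c) <-> weak_coboundary c) /\
  (* Ext_w(A,G) is Polish, i.e. B_w is closed in Z *)
  (forall c : A -> A -> G,
      cocycle c -> in_closure (@weak_coboundary A G) c -> weak_coboundary c).
Proof.
split=> c.
  split=> [[c_cocycle c_cl] | [c_cocycle c_split]].
    split=> //; apply: in_closure_coboundary_on c_cl.
    by move=> b S [phi [phi0 phiE]] _; exists phi; split=> // x y _ _; apply: phiE.
  by split; last exact: cocycle_in_closure.
move=> c_cocycle c_cl; split=> //; apply: in_closure_coboundary_on c_cl.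
by move=> b S [_ b_split]; apply: b_split.
Qed.
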